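(* Let $a \ge 1$ and $1 \le k \le a$ be integers. There exist a finite directed graph $H$, vertices $p,q$ of $H$, an incoming arc $e_{in}$ ending at $p$ and an outgoing arc $e_{out}$ starting at $q$ (with their other endpoints outside $H$), such that every vertex of $H$ has in-degree plus out-degree at most $4$ when $e_{in}, e_{out}$ are counted, and for every nonnegative integer $t$ the following are equivalent: (1) $k \le t \le a$; (2) when $e_{in}$ and $e_{out}$ both receive label $t$, there is an assignment of nonnegative integer labels to the arcs of $H$ such that for every vertex $v$ of $H$ the sum of labels on arcs entering $v$ and the sum of labels on arcs leaving $v$ (including $e_{in}$ and $e_{out}$) are both equal to $a$, and every vertex of $H$ is connected to $p$ via arcs of $H$ with positive label (ignoring directions). *)

From mathcomp Require Import all_boot.
Set Implicit Arguments. Unset Strict Implicit. Unset Printing Implicit Defensive.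

Record digraph := Digraph {
  dvert : finType;
  darc : finType;
  dsrc : darc -> dvert;
  dtgt : darc -> dvert }.

Definition loopless (H : digraph) : Prop := forall e : darc H, dsrc e != dtgt e.

Definition indeg (H : digraph) (v : dvert H) : nat := #|[set e | dtgt e == v]|.
Definition outdeg (H : digraph) (v : dvert H) : nat := #|[set e | dsrc e == v]|.

(* degree bound with the external arcs e_in (ending at p) and e_out
   (starting at q) counted *)
Definition deg_le4 (H : digraph) (p q : dvert H) : Prop :=
  forall v : dvert H, (v == p) + indeg v + (outdeg v + (v == q)) <= 4.

Definition in_sum (H : digraph) (p : dvert H) (t : nat) (f : darc H -> nat)
  (v : dvert H) : nat := (if v == p then t else 0) + \sum_(e | dtgt e == v) f e.

Definition out_sum (H : digraph) (q : dvert H) (t : nat) (f : darc H -> nat)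
  (v : dvert H) : nat := (if v == q then t else 0) + \sum_(e | dsrc e == v) f e.

Definition pos_adj (H : digraph) (f : darc H -> nat) : rel (dvert H) :=
  fun x y => [exists e, (0 < f e) &&
     (((dsrc e == x) && (dtgt e == y)) || ((dsrc e == y) && (dtgt e == x)))].

Definition good_labelling (H : digraph) (p q : dvert H) (a t : nat)
  (f : darc H -> nat) : Prop :=
  (forall v, in_sum p t f v = a) /\ (forall v, out_sum q t f v = a) /\
  (forall v, connect (pos_adj f) v p).

From HB Require Import structures.
From mathcomp Require Import all_boot zify.
Set Implicit Arguments. Unset Strict Implicit. Unset Printing Implicit Defensive.

(* Take k = n+1 gadgets in a cycle; each has a lower, a middle and an upper
   pair of vertices, the middle pair being attached only by the arcs
   Low1 -> Mid0 and Mid1 -> Up0. Balance at the middle pair forces these two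
   arcs to carry the same label, and connectivity forces it to be positive.
   Everything that enters at p (in the lower half) leaves at q (in the upper
   half), so t is the sum of these k positive labels and t >= k; t <= a is
   balance at p. Conversely, for k <= t <= a, the lower row carries t - i
   into gadget i, each middle pair lifts one unit (the last one lifts the
   remaining t - n), and the upper row brings it back to q. *)

Lemma sum_over_fibres (A V : finType) (g : A -> V) (S : {pred V}) (F : A -> nat) :
  \sum_(v in S) \sum_(e | g e == v) F e = \sum_(e | g e \in S) F e.
Proof.
rewrite [RHS](partition_big g (mem S)) //=; apply: eq_bigr => v vS.
by apply: eq_bigl => e; case: eqP => [->|]; rewrite ?andbT ?andbF.
Qed.

Lemma sum_if_eq (V : finType) (S : {pred V}) (x : V) (u : nat) :
  \sum_(v in S) (if v == x then u else 0) = (x \in S) * u.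
Proof.
case: (boolP (x \in S)) => xS.
  by rewrite (bigD1 x) //= eqxx big1 ?addn0 ?mul1n // => v /andP[_ /negbTE ->].
by rewrite big1 // => v vS; case: eqP => // vx; rewrite -vx vS in xS.
Qed.

Section BalancedLabelling.

Variables (H : digraph) (p q : dvert H) (a t : nat) (f : darc H -> nat).
Hypothesis in_balanced : forall v, in_sum p t f v = a.
Hypothesis out_balanced : forall v, out_sum q t f v = a.

Lemma external_label_le : t <= a.
Proof. by rewrite -(in_balanced p) /in_sum eqxx leq_addr. Qed.

(* Summing the balance equations over S, the arcs inside S cancel. *)
Lemma cut_balance (S : {pred dvert H}) :
  (p \in S) * t + \sum_(e | (dtgt e \in S) && (dsrc e \notin S)) f e =
  (q \in S) * t + \sum_(e | (dsrc e \in S) && (dtgt e \notin S)) f e.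
Proof.
have : \sum_(v in S) in_sum p t f v = \sum_(v in S) out_sum q t f v.
  by apply: eq_bigr => v _; rewrite in_balanced out_balanced.
rewrite !big_split /= !sum_if_eq !sum_over_fibres.
rewrite (bigID (fun e => dsrc e \in S)) (bigID (fun e => dtgt e \in S) (fun e => dsrc e \in S)) /=.
under [X in _ + (X + _) = _]eq_bigl => e do rewrite andbC.
lia.
Qed.

End BalancedLabelling.

Section PositiveSupport.

Variables (H : digraph) (f : darc H -> nat).

Lemma connect_pos_arc e x :
  0 < f e -> connect (pos_adj f) (dsrc e) x -> connect (pos_adj f) (dtgt e) x.
Proof.
move=> fe; apply: connect_trans; apply: connect1.
by apply/existsP; exists e; rewrite fe !eqxx orbT.
Qed.

Lemma pos_adj_closed (X : {pred dvert H}) :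
  (forall e, 0 < f e -> (dsrc e \in X) = (dtgt e \in X)) -> closed (pos_adj f) X.
Proof.
move=> noncrossing x y /existsP[e /andP[fe /orP[]]] /andP[/eqP<- /eqP<-];
  by rewrite noncrossing.
Qed.

End PositiveSupport.

Inductive node := Low0 | Low1 | Mid0 | Mid1 | Up0 | Up1.

Definition node_code (x : node) : nat :=
  match x with Low0 => 0 | Low1 => 1 | Mid0 => 2 | Mid1 => 3 | Up0 => 4 | Up1 => 5 end.
Definition code_node (c : nat) : node := nth Low0 [:: Low0; Low1; Mid0; Mid1; Up0; Up1] c.
Lemma node_codeK : cancel node_code code_node. Proof. by case. Qed.
HB.instance Definition _ := Countable.copy node (can_type node_codeK).
Lemma node_enumP : Finite.axiom [:: Low0; Low1; Mid0; Mid1; Up0; Up1]. Proof. by case. Qed.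
HB.instance Definition _ := isFinite.Build node node_enumP.
Lemma node_eqE x y : (x == y) = (node_code x == node_code y). Proof. by []. Qed.

Inductive link :=
  Low01 | Low10 | LowMid | Mid01 | Mid10 | MidUp | Up01 | Up10 | LowNext | UpPrev.

Definition link_code (l : link) : nat :=
  match l with
  | Low01 => 0 | Low10 => 1 | LowMid => 2 | Mid01 => 3 | Mid10 => 4
  | MidUp => 5 | Up01 => 6 | Up10 => 7 | LowNext => 8 | UpPrev => 9 end.
Definition link_enum :=
  [:: Low01; Low10; LowMid; Mid01; Mid10; MidUp; Up01; Up10; LowNext; UpPrev].
Definition code_link (c : nat) : link := nth Low01 link_enum c.
Lemma link_codeK : cancel link_code code_link. Proof. by case. Qed.
HB.instance Definition _ := Countable.copy link (can_type link_codeK).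
Lemma link_enumP : Finite.axiom link_enum. Proof. by case. Qed.
HB.instance Definition _ := isFinite.Build link link_enumP.
Lemma link_eqE l l' : (l == l') = (link_code l == link_code l'). Proof. by []. Qed.

Lemma ordS_eq m (i j : 'I_m) : (ordS i == j) = (i == ord_pred j).
Proof. by apply/eqP/eqP => [<-|->]; rewrite ?ordSK ?ord_predK. Qed.

Lemma val_ord_pred m (j : 'I_m.+1) : val (ord_pred j) = if val j == 0 then m else (val j).-1.
Proof.
rewrite /=; have := ltn_ord j; case: eqP => [->|j0 jm]; first by rewrite modn_small.
by rewrite -subn1 -addnBAC ?lt0n ?modnDr ?modn_small ?subn1 //; [lia | apply/eqP].
Qed.

Section GadgetRing.

Variable n : nat.
Local Notation vertex := ('I_n.+1 * node)%type.
Local Notation arc := ('I_n.+1 * link)%type.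

Definition ring_src (e : arc) : vertex :=
  let: (i, l) := e in
  match l with
  | Low01 => (i, Low0) | Low10 | LowMid | LowNext => (i, Low1)
  | Mid01 => (i, Mid0) | Mid10 | MidUp => (i, Mid1)
  | Up01 => (i, Up0) | Up10 => (i, Up1) | UpPrev => (ordS i, Up1) end.

Definition ring_tgt (e : arc) : vertex :=
  let: (i, l) := e in
  match l with
  | Low10 => (i, Low0) | Low01 => (i, Low1) | LowNext => (ordS i, Low0)
  | Mid10 | LowMid => (i, Mid0) | Mid01 => (i, Mid1)
  | Up10 | MidUp | UpPrev => (i, Up0) | Up01 => (i, Up1) end.

Definition gadget_ring := Digraph ring_src ring_tgt.

Definition arcs_into (v : vertex) : seq arc :=
  let: (j, x) := v in
  match x with
  | Low0 => [:: (j, Low10); (ord_pred j, LowNext)]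
  | Low1 => [:: (j, Low01)]
  | Mid0 => [:: (j, LowMid); (j, Mid10)]
  | Mid1 => [:: (j, Mid01)]
  | Up0 => [:: (j, MidUp); (j, Up10); (j, UpPrev)]
  | Up1 => [:: (j, Up01)] end.

Definition arcs_out_of (v : vertex) : seq arc :=
  let: (j, x) := v in
  match x with
  | Low0 => [:: (j, Low01)]
  | Low1 => [:: (j, Low10); (j, LowMid); (j, LowNext)]
  | Mid0 => [:: (j, Mid01)]
  | Mid1 => [:: (j, Mid10); (j, MidUp)]
  | Up0 => [:: (j, Up01)]
  | Up1 => [:: (j, Up10); (ord_pred j, UpPrev)] end.

Ltac gadget_simpl :=
  rewrite /= ?inE ?xpair_eqE ?node_eqE ?link_eqE /= ?andbT ?andbF ?orbF ?ordS_eq.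

Lemma ring_tgtE e v : (ring_tgt e == v) = (e \in arcs_into v).
Proof. by case: e v => i l [j x]; case: l; case: x; gadget_simpl. Qed.

Lemma ring_srcE e v : (ring_src e == v) = (e \in arcs_out_of v).
Proof. by case: e v => i l [j x]; case: l; case: x; gadget_simpl. Qed.

Lemma uniq_arcs_into v : uniq (arcs_into v).
Proof. by case: v => j []; gadget_simpl. Qed.

Lemma uniq_arcs_out_of v : uniq (arcs_out_of v).
Proof. by case: v => j []; gadget_simpl. Qed.

Lemma sum_arcs_into (F : arc -> nat) v :
  \sum_(e : darc gadget_ring | dtgt e == v) F e = \sum_(e <- arcs_into v) F e.
Proof. by rewrite big_uniq ?uniq_arcs_into //; apply: eq_bigl => e; rewrite /= ring_tgtE. Qed.

Lemma sum_arcs_out_of (F : arc -> nat) v :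
  \sum_(e : darc gadget_ring | dsrc e == v) F e = \sum_(e <- arcs_out_of v) F e.
Proof. by rewrite big_uniq ?uniq_arcs_out_of //; apply: eq_bigl => e; rewrite /= ring_srcE. Qed.

Lemma ring_indeg (v : dvert gadget_ring) : indeg v = size (arcs_into v).
Proof.
rewrite /indeg -(card_uniqP (uniq_arcs_into v)); apply: eq_card => e.
by rewrite inE /= ring_tgtE.
Qed.

Lemma ring_outdeg (v : dvert gadget_ring) : outdeg v = size (arcs_out_of v).
Proof.
rewrite /outdeg -(card_uniqP (uniq_arcs_out_of v)); apply: eq_card => e.
by rewrite inE /= ring_srcE.
Qed.

Lemma ring_loopless : loopless gadget_ring.
Proof. by case=> i []; gadget_simpl. Qed.

Definition ring_entry : dvert gadget_ring := (ord0, Low0).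
Definition ring_exit : dvert gadget_ring := (ord0, Up1).

Lemma ring_deg_le4 : deg_le4 ring_entry ring_exit.
Proof.
move=> v; rewrite ring_indeg ring_outdeg.
by case: v => j []; gadget_simpl; case: (j == ord0).
Qed.

(* [residual t i] is the part of the external label [t] still to be lifted
   to the upper row when the lower row enters gadget [i]; it vanishes past
   the last gadget [n]. *)
Definition residual (t i : nat) : nat := if i <= n then t - i else 0.

Lemma residual0 t : residual t 0 = t.
Proof. by rewrite /residual subn0. Qed.

Lemma residual_le t i : residual t i <= t.
Proof. rewrite /residual; case: ifP => _; lia. Qed.

Lemma residual_succ_le t i : residual t i.+1 <= residual t i.
Proof. rewrite /residual; do 2 case: ifP; lia. Qed.

Lemma residual_succ_lt t i : n < t -> i <= n -> residual t i.+1 < residual t i.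
Proof. rewrite /residual => nt le_in; rewrite le_in; case: ifP; lia. Qed.

Lemma residual_ord_pred t (j : 'I_n.+1) :
  residual t (ord_pred j).+1 = if j == ord0 then 0 else residual t j.
Proof.
rewrite val_ord_pred -[j == ord0]/(val j == 0) /residual.
have := ltn_ord j; case: eqP => [_|j0 jn]; first by rewrite ltnn.
by rewrite prednK ?lt0n; last apply/eqP.
Qed.

Definition ring_labelling (a t : nat) : darc gadget_ring -> nat :=
  fun e => let: (i, l) := e in
  let r := residual t i in let r' := residual t i.+1 in
  match l with
  | Low01 | Mid01 | Up01 => a
  | Low10 | Up10 => a - r
  | LowMid | MidUp => r - r'
  | Mid10 => a - (r - r')
  | LowNext | UpPrev => r'
  end.

Section RingLabelling.

Variables a t : nat.
Hypothesis t_le_a : t <= a.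

Lemma ring_labelling_in_balanced v : in_sum ring_entry t (ring_labelling a t) v = a.
Proof.
case: v => j x; rewrite /in_sum sum_arcs_into.
have := residual_le t j; have := residual_succ_le t j.
case: x; rewrite /= !big_cons big_nil; gadget_simpl; try lia.
rewrite residual_ord_pred; case: eqP => [->|_]; rewrite ?residual0; lia.
Qed.

Lemma ring_labelling_out_balanced v : out_sum ring_exit t (ring_labelling a t) v = a.
Proof.
case: v => j x; rewrite /out_sum sum_arcs_out_of.
have := residual_le t j; have := residual_succ_le t j.
case: x; rewrite /= !big_cons big_nil; gadget_simpl; try lia.
rewrite residual_ord_pred; case: eqP => [->|_]; rewrite ?residual0; lia.
Qed.

Hypotheses (a_pos : 0 < a) (n_lt_t : n < t).

Lemma ring_labelling_connected v :
  connect (pos_adj (ring_labelling a t)) v ring_entry.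
Proof.
have bridge_pos (i : 'I_n.+1) : 0 < residual t i - residual t i.+1.
  by rewrite subn_gt0 residual_succ_lt // -ltnS.
have follow i l : 0 < ring_labelling a t (i, l) ->
    connect (pos_adj (ring_labelling a t)) (ring_src (i, l)) ring_entry ->
    connect (pos_adj (ring_labelling a t)) (ring_tgt (i, l)) ring_entry.
  exact: (@connect_pos_arc gadget_ring _ (i, l)).
have low0 m : m <= n -> connect (pos_adj (ring_labelling a t)) (inord m, Low0) ring_entry.
  elim: m => [_|m IH lt_mn].
    by rewrite (_ : inord 0 = ord0) //; apply: val_inj; rewrite /= inordK.
  have -> : inord m.+1 = ordS (inord m : 'I_n.+1).
    by apply: val_inj; rewrite /= !inordK ?modn_small //; lia.
  apply: (follow _ LowNext) => /=.
    by rewrite inordK; [apply: leq_ltn_trans (residual_succ_lt _ _) | lia].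
  by apply: (follow _ Low01) => //; apply: IH; lia.
case: v => j x; rewrite -(inord_val j).
have := low0 j (leq_ord j); set j' := inord j => c0.
have c1 := follow j' Low01 a_pos c0.
have c2 := follow j' LowMid (bridge_pos j') c1.
have c3 := follow j' Mid01 a_pos c2.
have c4 := follow j' MidUp (bridge_pos j') c3.
have c5 := follow j' Up01 a_pos c4.
by case: x.
Qed.

Lemma ring_labelling_good :
  good_labelling ring_entry ring_exit a t (ring_labelling a t).
Proof.
split; first exact: ring_labelling_in_balanced.
by split; [exact: ring_labelling_out_balanced | exact: ring_labelling_connected].
Qed.

End RingLabelling.

Section RingLowerBound.

Variables (a t : nat) (f : darc gadget_ring -> nat).
Hypothesis good : good_labelling ring_entry ring_exit a t f.

Lemma ring_bridge_pos i : 0 < f (i, MidUp).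
Proof.
case: good => in_bal [out_bal conn].
rewrite lt0n; apply/negP => /eqP bridge0.
have rise0 : f (i, LowMid) = 0.
  have := in_bal (i, Mid0); have := out_bal (i, Mid1).
  rewrite /in_sum /out_sum sum_arcs_into sum_arcs_out_of /= !big_cons !big_nil.
  gadget_simpl; rewrite bridge0; lia.
(* Otherwise no positive arc leaves the middle pair of gadget i. *)
pose X := [pred v : vertex | (v.1 == i) && (v.2 \in [:: Mid0; Mid1])].
have X_closed : closed (pos_adj f) X.
  apply: pos_adj_closed; case=> i' l; case: l; gadget_simpl => //;
    by case: eqP => // ->; rewrite ?rise0 ?bridge0.
by have := closed_connect X_closed (conn (i, Mid0)); gadget_simpl; rewrite eqxx.
Qed.

Lemma ring_external_label_gt : n < t.
Proof.
case: good => in_bal [out_bal _].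
(* No arc enters the lower half, and only the arcs MidUp leave it. *)
have := cut_balance in_bal out_bal [pred v : vertex | v.2 \notin [:: Up0; Up1]].
rewrite big_pred0 => [|[i l]]; last by case: l; gadget_simpl.
rewrite (eq_bigl (fun e : arc => e.2 == MidUp)) => [|[i l]]; last by case: l; gadget_simpl.
rewrite (partition_big (fun e : arc => e.1) xpredT) //= mul1n mul0n addn0 => ->.
apply: leq_trans (_ : \sum_(i < n.+1) 1 <= _); first by rewrite sum1_card card_ord.
apply: leq_sum => i _.
rewrite (big_pred1 (i, MidUp)) ?ring_bridge_pos // => -[j l] /=.
by rewrite xpair_eqE andbC.
Qed.

End RingLowerBound.

End GadgetRing.

Theorem lemma4p5 (a k : nat) (ha : 1 <= a) (hk : 1 <= k) (hka : k <= a) :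
  exists (H : digraph) (p q : dvert H),
    loopless H /\ deg_le4 p q /\
    forall t : nat, (k <= t <= a) <-> exists f : darc H -> nat, good_labelling p q a t f.
Proof.
case: k hk hka => // n _ _.
exists (gadget_ring n), (ring_entry n), (ring_exit n).
split; first exact: ring_loopless.
split; first exact: ring_deg_le4.
move=> t; split => [/andP[n_lt_t t_le_a] | [f good]].
  by exists (ring_labelling a t); apply: ring_labelling_good.
rewrite (ring_external_label_gt good) /=; case: good => in_bal [out_bal _].
exact: external_label_le in_bal.
Qed.
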